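(* The cocharacter (coweight) lattice \(Y(G(\psi)) = \operatorname{Hom}(\mathbb{G}_m, T_{G(\psi)})\) of \(G(\psi)\) has the following \(\mathbb{Z}\)-basis \(\gamma_0^\vee, \ldots, \gamma_n^\vee\) (elements of \(Y(\mathrm{GL}(W))\otimes\mathbb{Q}\)): \[ \gamma_i^\vee = \begin{cases} \left(\frac{k}{n+1}-1\right)\tau_W^\vee + \psi(e_i^\vee), & 0\le i\le k-2,\\[2pt] \frac{k}{n+1}\,\tau_W^\vee + \psi(e_i^\vee), & k-1\le i\le n.\end{cases} \]
   Context: \(\Bbbk\) is an algebraically closed field of characteristic zero. \(V\) has basis \(e_0,\ldots,e_n\), \(1\le k\le n\), \(G=\mathrm{SL}(V)\) with diagonal maximal torus \(T_G\), \(W=\Lambda^k(V)\) with basis \(e_I=e_{i_1}\wedge\cdots\wedge e_{i_k}\) for \(I=\{i_1<\cdots<i_k\}\), and \(\psi\colon G\to\mathrm{GL}(W)\) the fundamental representation. \(G(\psi)=\psi(G)\cdot Z(\mathrm{GL}(W))\subset\mathrm{GL}(W)\), with maximal torus \(T_{G(\psi)}=\psi(T_G)\cdot Z(\mathrm{GL}(W))\) contained in the diagonal torus \(T_W\) of \(\mathrm{GL}(W)\) (w.r.t. the basis \(e_I\)); so \(Y(G(\psi))\subset Y(T_W)\simeq\mathbb{Z}^{\{I\}}\), and all these lattices sit in \(Y(T_W)\otimes\mathbb{Q}\). \(\tau_W^\vee\colon c\mapsto c\cdot\mathrm{Id}_W\) is the central cocharacter. Let \(\varepsilon_i\) be the cocharacter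 of the diagonal torus of \(\mathrm{GL}(V)\) putting \(c\) in position \(i\) and \(1\) elsewhere. Let \(\omega_j^\vee=\sum_{l<j}\varepsilon_l-\frac{j}{n+1}\sum_{l=0}^n\varepsilon_l\) (\(j=1,\dots,n\)) be the (rational) fundamental coweights of \(\mathrm{SL}(V)\), \(\omega_0^\vee=\omega_{n+1}^\vee=0\), and \(e_i^\vee=\omega_{i+1}^\vee-\omega_i^\vee=\varepsilon_i-\frac1{n+1}\sum_l\varepsilon_l\) for \(i=0,\dots,n\). \(\psi\) is extended \(\mathbb{Q}\)-linearly to rational cocharacters; explicitly \(\psi(e_i^\vee)\) acts on \(e_I\) with weight \([i\in I]-\frac{k}{n+1}\). *)

From HB Require Import structures.
From mathcomp Require Import all_boot all_order all_algebra.
Unset Printing Implicit Defensive.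
Import Order.TTheory GRing.Theory Num.Theory.
Local Open Scope ring_scope.

(* V has basis e_0..e_n, indexed by 'I_n.+1.  The basis e_I of W = Λ^k V is
   indexed by k-subsets I of {0..n}. *)
Definition kset (n k : nat) := {I : {set 'I_n.+1} | #|I| == k}.

(* An element of the diagonal torus T_W of GL(W) is given by its diagonal
   d : kset n k -> F (entries nonzero).  It lies in
   T_{G(psi)} = psi(T_G) . Z(GL(W)) iff d = z * psi(diag t) with
   t in the diagonal torus of SL(V) (prod t_i = 1) and z a nonzero scalar;
   psi(diag t) acts on e_I by prod_{i in I} t_i. *)
Definition in_TGpsi (F : fieldType) (n k : nat) (d : kset n k -> F) : Prop :=
  exists (t : 'I_n.+1 -> F) (z : F),
    [/\ forall i, t i != 0, \prod_i t i = 1, z != 0 &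
        forall I : kset n k, d I = z * \prod_(i in val I) t i].

(* Y(T_W) = Z^{I}: m gives the cocharacter c |-> diag(c^{m_I}).
   It is a cocharacter of T_{G(psi)} iff its image lies in T_{G(psi)}. *)
Definition cochar_Gpsi (F : fieldType) (n k : nat) (m : kset n k -> int) : Prop :=
  forall c : F, c != 0 -> @in_TGpsi F n k (fun I : kset n k => c ^ m I).

(* Y(G(psi)) viewed inside Y(T_W) (x) Q = Q^{I}. *)
Definition inY (F : fieldType) (n k : nat) (x : kset n k -> rat) : Prop :=
  exists m : kset n k -> int,
    (forall I, x I = (m I)%:~R) /\ @cochar_Gpsi F n k m.

Definition tauW (n k : nat) : kset n k -> rat := fun _ => 1.

(* rational cocharacters of the diagonal torus of GL(V): 'I_n.+1 -> rat
   (coefficients on eps_0..eps_n).  omega_j^vee, with omega_0 = omega_{n+1} = 0. *)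
Definition omega (n j : nat) : 'I_n.+1 -> rat :=
  fun l => (l < j)%N%:R - j%:R / n.+1%:R.

Definition ecow (n : nat) (i : 'I_n.+1) : 'I_n.+1 -> rat :=
  fun l => omega n i.+1 l - omega n i l.

(* Q-linear extension of psi : Y(T_G) -> Y(T_W):
   psi(sum_l y_l eps_l) acts on e_I with weight sum_{l in I} y_l. *)
Definition psiQ (n k : nat) (y : 'I_n.+1 -> rat) : kset n k -> rat :=
  fun I => \sum_(l in val I) y l.

Definition gamma (n k : nat) (i : 'I_n.+1) : kset n k -> rat :=
  fun I =>
    if (i.+2 <= k)%N
    then (k%:R / n.+1%:R - 1) * tauW n k I + psiQ n k (ecow n i) I
    else (k%:R / n.+1%:R) * tauW n k I + psiQ n k (ecow n i) I.

From HB Require Import structures.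
From mathcomp Require Import all_boot all_order all_algebra.
From mathcomp Require Import ring zify.
Import Order.TTheory GRing.Theory Num.Theory.
Local Open Scope ring_scope.

(* The cocharacter gamma_i acts on e_I with weight [i \in I] - [i <= k-2], so
   the integral span of the gamma_i consists of the weights that are affine in
   the indicator of I, I |-> w + sum_(i in I) a_i.  These are exactly the
   cocharacters of T_G(psi): an affine weight is realised by t_i = c^a_i lam
   with lam^(n+1) = c^-(sum a), which exists as the field is algebraically
   closed.  Conversely, evaluating at c = 2 and comparing the k-sets i + R and
   p + R gives 2^a_i = t_i / t_p, whence 2^(m_I - sum_(i in I) a_i) = z t_p^k
   does not depend on I; as 2 has infinite order in characteristic 0, m is
   affine.  Comparing x + R with y + R also shows that a combination vanishing
   on every I has constant coefficients, hence is zero. *)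

Lemma pchar0_exp2_eq1 {F : fieldType} :
  [pchar F] =i pred0 -> forall N : nat, (2 : F) ^+ N = 1 -> N = 0%N.
Proof.
move=> hF N; rewrite -natrX -(prednK (expn_gt0 2 N)) -addn1 natrD.
move=> /eqP; rewrite -subr_eq0 addrK (pcharf0P F).1 //.
by case: N => // N; rewrite expnS; have := expn_gt0 2 N; lia.
Qed.

Lemma expfz2_inj {F : fieldType} : [pchar F] =i pred0 ->
  injective (fun j : int => (2 : F) ^ j).
Proof.
move=> hF; have two_neq0 : (2 : F) != 0 by rewrite (pcharf0P F).1.
suff eq1 (j : int) : (2 : F) ^ j = 1 -> j = 0.
  move=> a b /= e; apply/eqP; rewrite -subr_eq0; apply/eqP/eq1.
  by rewrite expfzDr // -invr_expz e divff // expfz_neq0.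
case: j => N; first by move/(pchar0_exp2_eq1 hF) ->.
rewrite NegzE -invr_expz => /(congr1 GRing.inv); rewrite invrK invr1.
by move/(pchar0_exp2_eq1 hF).
Qed.

Lemma nth_root_closed {F : closedFieldType} {N : nat} (b : F) :
  (0 < N)%N -> exists x : F, x ^+ N = b.
Proof.
move=> N_gt0; have /closed_rootP [x] : size ('X^N - b%:P) != 1%N.
  by rewrite size_XnsubC // eqSS -lt0n.
by rewrite rootE !hornerE subr_eq0 => /eqP; exists x.
Qed.

Section KSubsets.

Context {T : finType} {k : nat}.
Hypotheses (k_gt0 : (0 < k)%N) (k_lt_card : (k < #|T|)%N).

Local Notation ksub := {I : {set T} | #|I| == k}.

Definition affine_ksub (m : ksub -> int) : Prop :=
  exists (w : int) (a : T -> int), forall I, m I = w + \sum_(i in val I) a i.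

Lemma exists_ksub_exchange (x y : T) :
  exists (I J : ksub) (R : {set T}),
    [/\ val I = x |: R, val J = y |: R, x \notin R & y \notin R].
Proof.
have : (k.-1 <= #|~: [set x; y]|)%N.
  move: k_lt_card (cardsC [set x; y]); rewrite -cardsT cards2.
  by case: (x != y) => /=; lia.
move/card_geqP => [s] [uniq_s size_s sub_s].
set R := [set z in s].
have cardR : #|R| = k.-1 by rewrite cardsE (card_uniqP uniq_s).
have [xR yR] : x \notin R /\ y \notin R.
  by split; apply/negP; rewrite inE => /sub_s; rewrite !inE eqxx ?orbT.
have cardU1 z : z \notin R -> #|z |: R| == k.
  by move=> zR; rewrite cardsU1 zR cardR; apply/eqP; lia.
by exists (exist _ (x |: R) (cardU1 x xR)), (exist _ (y |: R) (cardU1 y yR)), R.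
Qed.

Lemma exp_affine_ksub {F : fieldType} {m : ksub -> int} {z : F} {t : T -> F} :
  [pchar F] =i pred0 -> z != 0 -> (forall i, t i != 0) ->
  (forall I, 2 ^ m I = z * \prod_(i in val I) t i) -> affine_ksub m.
Proof.
move=> hF z_neq0 t_neq0 hm.
have two_neq0 : (2 : F) != 0 by rewrite (pcharf0P F).1.
have exp2D : {morph (fun j : int => (2 : F) ^ j) : u v / u + v >-> u * v}.
  by move=> u v; rewrite expfzDr.
have /card_gt0P [p _] : (0 < #|T|)%N := leq_ltn_trans (leq0n k) k_lt_card.
have ratio i : exists a : int, (2 : F) ^ a = t i / t p.
  have [I [J [R [EI EJ iR pR]]]] := exists_ksub_exchange i p.
  exists (m I - m J); rewrite expfzDr // -invr_expz !hm EI EJ !big_setU1 //=.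
  have prodR_neq0 : \prod_(j in R) t j != 0 by apply/prodf_neq0.
  by field; rewrite t_neq0 prodR_neq0 z_neq0.
have [a ha] := fin_all_exists ratio.
have scale I : (2 : F) ^ (m I - \sum_(i in val I) a i) = z * t p ^+ k.
  rewrite expfzDr // -invr_expz (big_morph _ exp2D (expr0z 2)).
  rewrite (eq_bigr _ (fun i _ => ha i)) prodf_div prodr_const (eqP (valP I)) hm.
  have prodI_neq0 : \prod_(i in val I) t i != 0 by apply/prodf_neq0.
  by field; rewrite prodI_neq0 expf_neq0.
have [I0 _] := exists_ksub_exchange p p.
exists (m I0 - \sum_(i in val I0) a i), a => I.
by rewrite -(expfz2_inj hF _ _ (etrans (scale I) (esym (scale I0)))) subrK.
Qed.

Lemma affine_ksub_exp {F : closedFieldType} {m : ksub -> int} :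
  affine_ksub m -> forall c : F, c != 0 ->
  exists (t : T -> F) (z : F),
    [/\ forall i, t i != 0, \prod_i t i = 1, z != 0 &
        forall I, c ^ m I = z * \prod_(i in val I) t i].
Proof.
move=> [w [a hm]] c c_neq0.
have expcD : {morph (fun j : int => c ^ j) : u v / u + v >-> u * v}.
  by move=> u v; rewrite expfzDr.
have card_gt0 : (0 < #|T|)%N := leq_ltn_trans (leq0n k) k_lt_card.
have [lam lamE] := nth_root_closed (c ^ - \sum_i a i) card_gt0.
have lam_neq0 : lam != 0.
  by have := expfz_neq0 (- \sum_i a i) c_neq0; rewrite -lamE expf_eq0 card_gt0.
exists (fun i => c ^ a i * lam), (c ^ w / lam ^+ k); split.
- by move=> i; rewrite mulf_neq0 ?expfz_neq0.
- rewrite big_split /= prodr_const lamE -(big_morph _ expcD (expr0z c)).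
  by rewrite -expfzDr // subrr expr0z.
- by rewrite mulf_neq0 ?invr_eq0 ?expfz_neq0 ?expf_neq0.
- move=> I; rewrite hm big_split /= prodr_const (eqP (valP I)).
  rewrite -(big_morph _ expcD (expr0z c)) expfzDr //.
  by field; rewrite expf_neq0.
Qed.

Lemma affine_ksubE {D : {set T}} {m : ksub -> int} : #|D| = k.-1 ->
  affine_ksub m <->
  exists a : T -> int, forall I, m I = \sum_(i in val I) a i - \sum_(i in D) a i.
Proof.
move=> cardD; split=> [[w [a hm]] | [a hm]]; last first.
  by exists (- \sum_(i in D) a i), a => I; rewrite hm addrC.
exists (fun i => a i + (w + \sum_(i in D) a i)) => I.
have mulrnk (x : int) : x *+ k = x + x *+ k.-1 by rewrite -mulrS prednK.
rewrite hm !big_split /= !sumr_const (eqP (valP I)) cardD !mulrnk.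
ring.
Qed.

Lemma ksub_sum_sub_eq0 {V : zmodType} {D : {set T}} {a : T -> V} :
  #|D| = k.-1 ->
  (forall I : ksub, \sum_(i in val I) a i - \sum_(i in D) a i = 0) ->
  forall x, a x = 0.
Proof.
move=> cardD h.
have a_const x y : a x = a y.
  have [I [J [R [EI EJ xR yR]]]] := exists_ksub_exchange x y.
  have := etrans (h I) (esym (h J)).
  by rewrite EI EJ !big_setU1 //= => /addIr/addIr.
move=> x; have [I _] := exists_ksub_exchange x x; move: (h I).
rewrite (eq_bigr (fun=> a x) (fun i _ => a_const i x)).
rewrite (eq_bigr (fun=> a x) (fun i _ => a_const i x)).
by rewrite !sumr_const (eqP (valP I)) cardD -{1}(prednK k_gt0) mulrS addrK.
Qed.

End KSubsets.

Lemma cochar_GpsiP {F : closedFieldType} {n k : nat} {m : kset n k -> int} :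
  [pchar F] =i pred0 -> (0 < k)%N -> (k <= n)%N ->
  cochar_Gpsi F n k m <-> affine_ksub m.
Proof.
move=> hF k_gt0 k_le_n; have k_lt_card : (k < #|'I_n.+1|)%N by rewrite card_ord.
split=> [hm | /(affine_ksub_exp k_lt_card) hm c /hm]; last exact.
have two_neq0 : (2 : F) != 0 by rewrite (pcharf0P F).1.
have [t [z [t_neq0 _ z_neq0 hd]]] := hm 2 two_neq0.
exact: (exp_affine_ksub k_gt0 k_lt_card hF z_neq0 t_neq0 hd).
Qed.

Lemma ecowE (n : nat) (i l : 'I_n.+1) : ecow n i l = (l == i)%:R - n.+1%:R^-1.
Proof.
rewrite /ecow /omega ltnS leq_eqVlt -val_eqE /= -[i.+1%:R]natr1.
by case: ltngtP => _ /=; ring.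
Qed.

Lemma psiQ_ecow (n k : nat) (i : 'I_n.+1) (I : kset n k) :
  psiQ n k (ecow n i) I = (i \in val I)%:R - k%:R / n.+1%:R.
Proof.
rewrite /psiQ (eq_bigr _ (fun l _ => ecowE n i l)) sumrB sumr_const.
rewrite (eqP (valP I)).
congr (_ - _); last by rewrite mulr_natl.
have [iI | iNI] := boolP (i \in val I).
  by rewrite (bigD1 i) //= eqxx big1 ?addr0 // => l /andP[_ /negbTE ->].
by rewrite big1 // => l lI; case: eqP lI iNI => // -> ->.
Qed.

Lemma gammaE (n k : nat) (i : 'I_n.+1) (I : kset n k) :
  gamma n k i I = (i \in val I)%:R - (i.+2 <= k)%:R.
Proof. by rewrite /gamma psiQ_ecow /tauW; case: ifP => _ /=; ring. Qed.

Definition low_ords (n k : nat) : {set 'I_n.+1} :=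
  [set i : 'I_n.+1 | (i.+2 <= k)%N].

Lemma card_low_ords (n k : nat) : (k <= n.+1)%N -> #|low_ords n k| = k.-1.
Proof.
move=> k_le; have km1_le : (k.-1 <= n.+1)%N by lia.
have -> : low_ords n k = widen_ord km1_le @: [set: 'I_k.-1].
  apply/setP => i; rewrite !inE; apply/idP/imsetP => [lt_ik | [j _ ->] /=].
    have lt_i : (i < k.-1)%N by lia.
    by exists (Ordinal lt_i); [rewrite inE | apply: val_inj].
  by have := ltn_ord j; lia.
by rewrite card_imset ?cardsT ?card_ord // => j1 j2 [] /val_inj.
Qed.

Lemma sum_gamma (n k : nat) (a : 'I_n.+1 -> int) (I : kset n k) :
  \sum_(i < n.+1) (a i)%:~R * gamma n k i I
  = (\sum_(i in val I) a i - \sum_(i in low_ords n k) a i)%:~R.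
Proof.
rewrite rmorphB !rmorph_sum /= [X in X - _]big_mkcond [X in _ - X]big_mkcond.
rewrite -sumrB; apply: eq_bigr => i _; rewrite gammaE mulrBr inE.
by do 2 case: ifP => _; rewrite /= ?mulr1 ?mulr0.
Qed.

Theorem proposition3p5 (F : closedFieldType) (hF : [pchar F] =i pred0)
  (n k : nat) (hk1 : (1 <= k)%N) (hkn : (k <= n)%N) :
  (forall x : kset n k -> rat,
      inY F n k x <->
      exists a : 'I_n.+1 -> int,
        forall I, x I = \sum_(i < n.+1) (a i)%:~R * gamma n k i I)
  /\
  (forall a : 'I_n.+1 -> int,
      (forall I : kset n k, \sum_(i < n.+1) (a i)%:~R * gamma n k i I = 0) ->
      forall i, a i = 0).
Proof.
have k_lt_card : (k < #|'I_n.+1|)%N by rewrite card_ord.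
have card_low := card_low_ords n k (leqW hkn).
split=> [x | a ha].
  split=> [[m [xm /(cochar_GpsiP hF hk1 hkn)]] | [a xa]].
    case/(affine_ksubE hk1 card_low) => a ma.
    by exists a => I; rewrite xm ma sum_gamma.
  exists (fun I : kset n k =>
    \sum_(i in val I) a i - \sum_(i in low_ords n k) a i).
  split=> [I | ]; first by rewrite xa sum_gamma.
  by apply/(cochar_GpsiP hF hk1 hkn)/(affine_ksubE hk1 card_low); exists a.
apply: (ksub_sum_sub_eq0 hk1 k_lt_card card_low) => I.
by apply/eqP; rewrite -(intr_eq0 rat) -sum_gamma ha.
Qed.
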